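(* Let $d,k\ge1$ be integers, $c\in(0,\tfrac12)$, $\alpha>1$, $\varepsilon\ge0$, and let $\mathcal{A}$ be the set of all randomized algorithms whose outputs lie in $[c,1-c]^d$. Then \[ \mathrm{post}_{\mathcal{A},\alpha,k}(\varepsilon)\le R_\alpha\big(\mathrm{Bern}_k((c,\dots,c)),\mathrm{Bern}_k((1-c,\dots,1-c))\big)=dk\,r_\alpha(c). \]
   Context: For distributions $P,Q$ and $\alpha>1$, $R_\alpha(P,Q)=\frac{1}{\alpha-1}\log\int(dP/dQ)^\alpha dQ$ is the Rényi divergence of order $\alpha$, and $r_\alpha(p)=\frac{1}{\alpha-1}\log\left(p^\alpha(1-p)^{1-\alpha}+(1-p)^\alpha p^{1-\alpha}\right)$. Datasets are related by a symmetric neighboring relation $D\sim D'$; a randomized algorithm $A$ maps each dataset $D$ to a distribution $A(D)$; $\varepsilon_A(\alpha)=\sup_{D\sim D'}R_\alpha(A(D),A(D'))$. For $x\in[0,1]^d$, $\mathrm{Bern}(x)$ is the random vector in $\{0,1\}^d$ with independent coordinates, coordinate $i$ equal to $1$ with probability $x_i$; $\mathrm{Bern}_k(x)$ denotes $k$ independent runs of $\mathrm{Bern}(x)$. For a distribution $P$ on $[0,1]^d$, $\mathrm{Bern}_k(P)$ is the distribution of $\mathrm{Bern}_k(X)$ with $X\sim P$, and $\mathrm{Bern}_k(A)$ is the algorithm $D\mapsto\mathrm{Bern}_k(A(D))$. For a family $\mathcal{A}$ of algorithms with outputs in $[0,1]^d$, $\mathrm{post}_{\mathcal{A},\alpha,k}(\varepsilon)=\sup_{A\in\mathcal{A},\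 \varepsilon_A(\alpha)\le\varepsilon}\varepsilon_{\mathrm{Bern}_k(A)}(\alpha)$. *)

From HB Require Import structures.
From mathcomp Require Import all_boot all_order all_algebra.
From mathcomp Require Import all_classical all_reals all_analysis.
Import Order.TTheory GRing.Theory Num.Theory.
Local Open Scope classical_set_scope.
Local Open Scope ring_scope.
Local Open Scope charge_scope.

Section Defs.
Context {R : realType}.

Definition renyi {dT} {T : measurableType dT} (alpha : R)
    (P Q : probability T R) : \bar R :=
  if pselect (P `<< Q) is left _ then
    match (\int[Q]_x ((fine ((('d (charge_of_finite_measure P) '/d Q) x)))
                         `^ alpha)%:E)%E with
    | r%:E => ((alpha - 1)^-1 * ln r)%:E
    | +oo%E => +oo%E
    | -oo%E => -oo%E
    end
  else +oo%E.

(* The same divergence for distributions on a finite set given by their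
   probability mass functions: here dP/dQ = p/q, so the integral is
   \sum_y p(y)^alpha q(y)^(1-alpha). *)
Definition renyi_pmf {T : finType} (alpha : R) (p q : T -> R) : \bar R :=
  if `[< forall y, q y = 0 -> p y = 0 >] then
    ((alpha - 1)^-1 * ln (\sum_(y : T) p y `^ alpha * q y `^ (1 - alpha)))%:E
  else +oo%E.

Definition r_fun (alpha p : R) : R :=
  (alpha - 1)^-1 * ln (p `^ alpha * (1 - p) `^ (1 - alpha)
                       + (1 - p) `^ alpha * p `^ (1 - alpha)).

(* vectors in R^d are d-tuples; outputs of Bern_k are k runs of d bits *)
Definition bern_out (d k : nat) := {ffun 'I_k -> {ffun 'I_d -> bool}}.

Definition bern_pmf (d k : nat) (x : d.-tuple R) (y : bern_out d k) : R :=
  \prod_(j < k) \prod_(i < d) (if y j i then tnth x i else 1 - tnth x i).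

Definition bern_mix_pmf (d k : nat) (P : probability (d.-tuple R) R)
    (y : bern_out d k) : R :=
  fine (\int[P]_x (bern_pmf d k x y)%:E)%E.

Definition eps_alg {Dset : Type} (nb : Dset -> Dset -> Prop) (d : nat)
    (A : Dset -> probability (d.-tuple R) R) (alpha : R) : \bar R :=
  ereal_sup [set r | exists D D', nb D D' /\ r = renyi alpha (A D) (A D')].

Definition eps_bern_alg {Dset : Type} (nb : Dset -> Dset -> Prop) (d k : nat)
    (A : Dset -> probability (d.-tuple R) R) (alpha : R) : \bar R :=
  ereal_sup [set r | exists D D', nb D D' /\
      r = renyi_pmf alpha (bern_mix_pmf d k (A D)) (bern_mix_pmf d k (A D'))].

Definition post {Dset : Type} (nb : Dset -> Dset -> Prop) (d k : nat)
    (F : set (Dset -> probability (d.-tuple R) R)) (alpha : R) (eps : \bar R)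
    : \bar R :=
  ereal_sup [set eps_bern_alg nb d k A alpha
              | A in [set A | F A /\ (eps_alg nb d A alpha <= eps)%E]].

Definition cube (d : nat) (c : R) : set (d.-tuple R) :=
  [set x | forall i : 'I_d, c <= tnth x i <= 1 - c].

Definition algs_in_cube {Dset : Type} (d : nat) (c : R) :
    set (Dset -> probability (d.-tuple R) R) :=
  [set A | forall D, A D (cube d c) = 1%E].

Definition const_vec (d : nat) (a : R) : d.-tuple R := [tuple of nseq d a].

End Defs.

From HB Require Import structures.
From mathcomp Require Import all_boot all_order all_algebra.
From mathcomp Require Import all_classical all_reals all_analysis.
From mathcomp Require Import ring lra.
Set Implicit Arguments.
Unset Strict Implicit.
Unset Printing Implicit Defensive.
Import Order.TTheory GRing.Theory Num.Theory.
Local Open Scope classical_set_scope.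
Local Open Scope ring_scope.

(* For [1 < a], [persp a u v = u ^ a * v ^ (1 - a)] is the perspective of [t ^ a]:
   convex and 1-homogeneous, it dominates its tangent plane along every ray and
   agrees with it on that ray.  Let [P], [Q] be the output laws of [Bern_k] on two
   datasets.  Taking for each outcome [y] the tangent along the ray through
   [(P y, Q y)] makes [\sum_y persp a (P y) (Q y)] linear in [P] and in [Q], i.e. an
   average over [x ~ A(D)], [x' ~ A(D')] of sums of tangents, each at most the value
   [(\prod_i H(x_i, x'_i)) ^ k] obtained for point masses, where
   [H(u, v) = persp a u v + persp a (1 - u) (1 - v)].  As [H] is convex on the square
   [[c, 1 - c]^2], it is maximal at a corner, where it is at most [H(c, 1 - c)]. *)

Section perspective.
Context {R : realType}.
Implicit Types a c r u v x y z : R.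

Lemma gt0_powRE x a : 0 < x -> x `^ a = expR (a * ln x).
Proof. by move=> x0; rewrite /powR gt_eqF. Qed.

Lemma bernoulli_expR a z : 1 < a -> a * expR z + 1 - a <= expR (a * z).
Proof.
move=> a1; have a0 : 0 < a by lra.
have b0 : 0 < a / (a - 1) by rewrite divr_gt0 // subr_gt0.
have conj : a^-1 + (a / (a - 1))^-1 = 1 by rewrite invf_div; field; lra.
have := conjugate_powR (ltW (expR_gt0 z)) ler01 a0 b0 conj.
rewrite powR1 mulr1 -expRM invf_div [z * a]mulrC => young.
have : a * expR z <= a * (expR (a * z) / a + 1 * ((a - 1) / a)) by rewrite ler_pM2l.
have -> : a * (expR (a * z) / a + 1 * ((a - 1) / a)) = expR (a * z) + (a - 1).
  by field; lra.
lra.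
Qed.

Definition persp a u v : R := u `^ a * v `^ (1 - a).

(* The tangent plane of [persp a] along the ray [u = r v]. *)
Definition persp_tangent a r u v : R :=
  a * r `^ (a - 1) * u + (1 - a) * r `^ a * v.

Lemma persp_ge_tangent a r u v : 1 < a -> 0 < u -> 0 < v -> 0 < r ->
  persp_tangent a r u v <= persp a u v.
Proof.
move=> a1 u0 v0 r0; rewrite /persp_tangent /persp !gt0_powRE //.
rewrite -{1}(lnK u0) -{1}(lnK v0) -!mulrA -!expRD.
move: (ln u) (ln v) (ln r) => lu lv lr.
have -> : (a - 1) * lr + lu = (lu - lv - lr) + (a * lr + lv) by ring.
have -> : a * lu + (1 - a) * lv = a * (lu - lv - lr) + (a * lr + lv) by ring.
move: (lu - lv - lr) (a * lr + lv) => z w; rewrite !expRD.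
have := bernoulli_expR z a1; have := expR_gt0 w; nra.
Qed.

Lemma persp_tangent_ratio a u v : 0 < u -> 0 < v ->
  persp_tangent a (u / v) u v = persp a u v.
Proof.
move=> u0 v0; rewrite /persp_tangent /persp !gt0_powRE ?divr_gt0 //.
rewrite lnM ?posrE ?invr_gt0 // lnV ?posrE //.
rewrite -{2}(lnK u0) -{3}(lnK v0) -!mulrA -!expRD.
have -> : (a - 1) * (ln u - ln v) + ln u = a * ln u + (1 - a) * ln v by ring.
have -> : a * (ln u - ln v) + ln v = a * ln u + (1 - a) * ln v by ring.
ring.
Qed.

Lemma persp_gt0 a u v : 0 < u -> 0 < v -> 0 < persp a u v.
Proof. by move=> u0 v0; rewrite mulr_gt0 ?powR_gt0. Qed.

Lemma persp_diag a u : 0 <= u -> persp a u u = u.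
Proof.
move=> u0; rewrite /persp -powRD; last by rewrite subrKC oner_eq0.
by rewrite subrKC powRr1.
Qed.

Lemma persp_prod (I : Type) (s : seq I) (F G : I -> R) a :
  (forall i, 0 <= F i) -> (forall i, 0 <= G i) ->
  persp a (\prod_(i <- s) F i) (\prod_(i <- s) G i) = \prod_(i <- s) persp a (F i) (G i).
Proof.
move=> F0 G0; elim: s => [|i s IHs]; first by rewrite !big_nil /persp !powR1 mulr1.
rewrite !big_cons -IHs /persp !powRM ?prodr_ge0 //; ring.
Qed.

Definition bern_affinity a u v : R := persp a u v + persp a (1 - u) (1 - v).

Lemma bern_affinity_diag a u : 0 <= u <= 1 -> bern_affinity a u u = 1.
Proof. by case/andP=> u0 u1; rewrite /bern_affinity !persp_diag ?subr_ge0 // subrKC. Qed.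

Lemma bern_affinity_compl a u v : bern_affinity a (1 - u) (1 - v) = bern_affinity a u v.
Proof. by rewrite /bern_affinity !subKr addrC. Qed.

Lemma bern_affinity_ge0 a u v : 0 <= bern_affinity a u v.
Proof. by rewrite addr_ge0 // mulr_ge0 // powR_ge0. Qed.

Lemma bern_affinity_ge1 a u v : 1 < a -> 0 < u < 1 -> 0 < v < 1 ->
  1 <= bern_affinity a u v.
Proof.
move=> a1 /andP[u0 u1] /andP[v0 v1].
have := persp_ge_tangent a1 u0 v0 ltr01.
have u0' : 0 < 1 - u by lra.
have v0' : 0 < 1 - v by lra.
have := persp_ge_tangent a1 u0' v0' ltr01.
rewrite /persp_tangent /bern_affinity !powR1; lra.
Qed.

Lemma affine_le_ends A K S x lo hi : lo <= x <= hi ->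
  A * lo + K <= S -> A * hi + K <= S -> A * x + K <= S.
Proof.
case/andP=> lox xhi hlo hhi; have [A0|A0] := leP 0 A.
- by apply: le_trans hhi; rewrite lerD2r ler_wpM2l.
- by apply: le_trans hlo; rewrite lerD2r ler_wnM2l // ltW.
Qed.

Lemma affine2_le_corners A B K S x y lo hi : lo <= x <= hi -> lo <= y <= hi ->
  (forall x' y', x' \in [:: lo; hi] -> y' \in [:: lo; hi] -> A * x' + B * y' + K <= S) ->
  A * x + B * y + K <= S.
Proof.
move=> hx hy corner; rewrite -addrA.
by apply: (affine_le_ends hx); rewrite addrCA; apply: (affine_le_ends hy);
  rewrite addrCA addrA corner ?inE ?eqxx ?orbT.
Qed.

(* [bern_affinity a] is convex on the square [c, 1 - c]^2: its tangent plane at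
   [(u, v)] is an affine minorant, and an affine function is maximal at a corner. *)
Lemma bern_affinity_le a c u v : 1 < a -> 0 < c ->
  c <= u <= 1 - c -> c <= v <= 1 - c -> bern_affinity a u v <= bern_affinity a c (1 - c).
Proof.
move=> a1 c0 hu hv.
have in01 w : c <= w <= 1 - c -> 0 < w < 1 by case/andP=> ? ?; apply/andP; split; lra.
have /andP[u0 u1] := in01 u hu; have /andP[v0 v1] := in01 v hv.
have c1 : 0 < c < 1 by apply/andP; split; case/andP: hu => *; lra.
set r1 := u / v; set r2 := (1 - u) / (1 - v).
pose T x y := persp_tangent a r1 x y + persp_tangent a r2 (1 - x) (1 - y).
have T_le x y : 0 < x < 1 -> 0 < y < 1 -> T x y <= bern_affinity a x y.
  case/andP=> x0 x1 /andP[y0 y1]; apply: lerD; apply: persp_ge_tangent;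
    rewrite ?divr_gt0 // subr_gt0 //.
have Tuv : T u v = bern_affinity a u v.
  by rewrite /T !persp_tangent_ratio // subr_gt0.
pose A := a * r1 `^ (a - 1) - a * r2 `^ (a - 1).
pose B := (1 - a) * r1 `^ a - (1 - a) * r2 `^ a.
pose K := a * r2 `^ (a - 1) + (1 - a) * r2 `^ a.
have TE x y : T x y = A * x + B * y + K by rewrite /T /persp_tangent /A /B /K; ring.
rewrite -Tuv TE; apply: (affine2_le_corners hu hv) => x y hx hy; rewrite -TE.
have hx01 : 0 < x < 1 by move: hx; rewrite !inE => /orP[] /eqP ->; apply/andP; split; lra.
have hy01 : 0 < y < 1 by move: hy; rewrite !inE => /orP[] /eqP ->; apply/andP; split; lra.
apply: (le_trans (T_le x y hx01 hy01)).
have ge1 := bern_affinity_ge1 a1 c1 (in01 (1 - c) _).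
move: hx hy; rewrite !inE => /orP[] /eqP -> /orP[] /eqP ->.
- by rewrite bern_affinity_diag ?ge1 //; apply/andP; split; lra.
- by [].
- by rewrite -bern_affinity_compl subKr.
- by rewrite bern_affinity_diag ?ge1 //; apply/andP; split; lra.
Qed.

End perspective.

Section full_measure.
Context d (T : measurableType d) (R : realType) (mu : probability T R) (D : set T).
Hypotheses (mD : measurable D) (muD : mu D = 1%E).
Local Open Scope ereal_scope.

Lemma integrable_bounded (g : T -> R) (M : R) : measurable_fun D g ->
  (forall x, D x -> (`|g x| <= M)%R) -> mu.-integrable D (EFin \o g).
Proof.
move=> mg gM; apply: measurable_bounded_integrable => //.
  exact: le_lt_trans (probability_le1 mu mD) (ltry 1).
exists M; split; first exact: num_real.
by move=> M' MM' x Dx; apply: le_trans (gM x Dx) (ltW MM').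
Qed.

Lemma integral_cst_full (r : R) : \int[mu]_(x in D) (cst r%:E) x = r%:E.
Proof. by rewrite integral_cst // -[X in _ * X]/(mu D) muD mule1. Qed.

Lemma integral_le_cst (g : T -> R) (M : R) : mu.-integrable D (EFin \o g) ->
  (forall x, D x -> (g x <= M)%R) -> \int[mu]_(x in D) (g x)%:E <= M%:E.
Proof.
move=> ig gM; apply: (@le_trans _ _ (\int[mu]_(x in D) (cst M%:E) x)).
  apply: le_integral => //; last by move=> x /set_mem Dx; rewrite lee_fin gM.
  by apply: (integrable_bounded (M := `|M|)) => //; exact: measurable_cst.
by rewrite integral_cst_full.
Qed.

Lemma integral_ge_cst (g : T -> R) (M : R) : mu.-integrable D (EFin \o g) ->
  (forall x, D x -> (M <= g x)%R) -> M%:E <= \int[mu]_(x in D) (g x)%:E.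
Proof.
move=> ig gM; apply: (@le_trans _ _ (\int[mu]_(x in D) (cst M%:E) x)).
  by rewrite integral_cst_full.
apply: le_integral => //; last by move=> x /set_mem Dx; rewrite lee_fin gM.
by apply: (integrable_bounded (M := `|M|)) => //; exact: measurable_cst.
Qed.

Lemma integral_restrict_full (g : T -> R) : measurable_fun setT g ->
  \int[mu]_x (g x)%:E = \int[mu]_(x in D) (g x)%:E.
Proof.
move=> mg; rewrite [RHS]integral_mkcond; apply: ae_eq_integral => //.
- exact/measurable_realfun.measurable_EFinP.
- rewrite (restrict_EFin g D); apply/measurable_realfun.measurable_EFinP.
  by apply/(measurable_restrictT _ mD); exact: measurable_funTS.
- exists (~` D); split; first exact: measurableC.
  + by have := probability_setC mu mD; rewrite muD subee.
  + by move=> x /= gx Dx; apply: gx => _; rewrite patchE mem_set.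
Qed.

End full_measure.

Lemma integral_pair_le_cst d (T : measurableType d) (R : realType) (mu nu : probability T R)
    (D : set T) (g h : T -> R) (M : R) : measurable D -> mu D = 1%E -> nu D = 1%E ->
  mu.-integrable D (EFin \o g) -> nu.-integrable D (EFin \o h) ->
  (forall x x', D x -> D x' -> g x + h x' <= M) ->
  (\int[mu]_(x in D) (g x)%:E + \int[nu]_(x in D) (h x)%:E <= M%:E)%E.
Proof.
move=> mD muD nuD ig ih ghM.
rewrite -(fineK (integrable_fin_num mD ig)) -(fineK (integrable_fin_num mD ih)).
set G := fine _; set H := fine _.
have hG x' : D x' -> h x' <= M - G.
  move=> Dx'; suff : G <= M - h x' by lra.
  rewrite -lee_fin fineK ?(integrable_fin_num mD ig) //.
  by apply: integral_le_cst => // x Dx; have := ghM x x' Dx Dx'; lra.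
have : H <= M - G.
  by rewrite -lee_fin fineK ?(integrable_fin_num mD ih) //; exact: integral_le_cst.
by rewrite -EFinD lee_fin; lra.
Qed.

Section bern_pmf.
Context {R : realType} (d k : nat).
Implicit Types (a c : R) (x : d.-tuple R) (y : bern_out d k).

Lemma measurable_cube c : measurable (cube d c).
Proof.
have -> : cube d c =
    \bigcap_(i in [set` enum 'I_d]) ((fun x : d.-tuple R => tnth x i) @^-1` `[c, 1 - c]).
  apply/seteqP; split => x /=.
    by move=> xc i _ /=; rewrite in_itv /= xc.
  by move=> xc i; have := xc i (mem_enum _ i); rewrite /= in_itv.
rewrite bigcap_seq; apply: bigsetI_measurable => i _.
by rewrite -[_ @^-1` _]setTI; apply: measurable_tnth => //; exact: measurable_itv.
Qed.

Lemma measurable_bern_pmf y : measurable_fun setT (fun x => bern_pmf d k x y).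
Proof.
apply: measurable_prod => j _; apply: measurable_prod => i _.
case: (y j i); first exact: measurable_tnth.
by apply: measurable_realfun.measurable_funB; [exact: measurable_cst | exact: measurable_tnth].
Qed.

Lemma const_vec_cube c : c <= 1 - c ->
  cube d c (const_vec d c) /\ cube d c (const_vec d (1 - c)).
Proof. by move=> c_le; split => i; rewrite tnth_nseq ?lexx c_le // subKr lexx andbT. Qed.

Let coord_bounds c x i (b : bool) : cube d c x ->
  c <= (if b then tnth x i else 1 - tnth x i) <= 1 - c.
Proof. by move/(_ i)/andP=> [? ?]; case: b; apply/andP; split; lra. Qed.

Lemma bern_pmf_le1 c x y : 0 <= c -> cube d c x -> bern_pmf d k x y <= 1.
Proof.
move=> c0 xc; apply: prodr_ile1 => j _; apply/andP; split.
  by apply: prodr_ge0 => i _; have /andP[? _] := coord_bounds i (y j i) xc; lra.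
apply: prodr_ile1 => i _; have /andP[? ?] := coord_bounds i (y j i) xc.
by apply/andP; split; lra.
Qed.

Lemma bern_pmf_ge c x y : 0 <= c -> cube d c x -> c ^+ (d * k) <= bern_pmf d k x y.
Proof.
move=> c0 xc; rewrite exprM -[k in _ ^+ k]card_ord -prodr_const /bern_pmf.
apply: ler_prod => j _; rewrite exprn_ge0 //= -[d in _ ^+ d]card_ord -prodr_const.
by apply: ler_prod => i _; rewrite c0; have /andP[] := coord_bounds i (y j i) xc.
Qed.

Lemma bern_pmf_gt0 c x y : 0 < c -> cube d c x -> 0 < bern_pmf d k x y.
Proof. by move=> c0 xc; apply: lt_le_trans (bern_pmf_ge y (ltW c0) xc); rewrite exprn_gt0. Qed.

Lemma sum_persp_bern_pmf a c x x' : 0 <= c -> cube d c x -> cube d c x' ->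
  \sum_y persp a (bern_pmf d k x y) (bern_pmf d k x' y)
  = (\prod_(i < d) bern_affinity a (tnth x i) (tnth x' i)) ^+ k.
Proof.
move=> c0 xc x'c.
pose coord x i (b : bool) := if b then tnth x i else 1 - tnth x i.
have coord_ge0 z i b : cube d c z -> 0 <= coord z i b.
  by move=> zc; have /andP[? _] := coord_bounds i b zc; rewrite /coord; lra.
pose G i b := persp a (coord x i b) (coord x' i b).
transitivity (\sum_(y : bern_out d k) \prod_(j < k) \prod_(i < d) G i (y j i)).
  apply: eq_bigr => y _; rewrite persp_prod; last 2 first.
  - by move=> j; apply: prodr_ge0 => i _; exact: coord_ge0.
  - by move=> j; apply: prodr_ge0 => i _; exact: coord_ge0.
  by apply: eq_bigr => j _; rewrite persp_prod // => i; exact: coord_ge0.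
rewrite -(bigA_distr_bigA (fun j (z : {ffun 'I_d -> bool}) => \prod_(i < d) G i (z i))) /=.
rewrite prodr_const card_ord -(bigA_distr_bigA G) /=.
by congr (_ ^+ _); apply: eq_bigr => i _; rewrite big_bool.
Qed.

Lemma sum_persp_bern_pmf_le a c x x' : 1 < a -> 0 < c -> cube d c x -> cube d c x' ->
  \sum_y persp a (bern_pmf d k x y) (bern_pmf d k x' y)
  <= bern_affinity a c (1 - c) ^+ (d * k).
Proof.
move=> a1 c0 xc x'c; rewrite (sum_persp_bern_pmf _ (ltW c0)) // exprM.
apply: lerXn2r; rewrite ?nnegrE.
- by apply: prodr_ge0 => i _; exact: bern_affinity_ge0.
- by rewrite exprn_ge0 ?bern_affinity_ge0.
rewrite -[d in _ ^+ d]card_ord -prodr_const.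
by apply: ler_prod => i _; rewrite bern_affinity_ge0 bern_affinity_le.
Qed.

End bern_pmf.

Section bern_mix_pmf.
Context {R : realType} (d k : nat) (c : R) (mu : probability (d.-tuple R) R).
Hypotheses (c0 : 0 < c) (muC : mu (cube d c) = 1%E).

Lemma integrable_bern_pmf (y : bern_out d k) :
  mu.-integrable (cube d c) (EFin \o fun x => bern_pmf d k x y).
Proof.
apply: (integrable_bounded mu (measurable_cube c) (M := 1)).
  exact: measurable_funTS (measurable_bern_pmf y).
move=> x xc; rewrite ger0_norm ?(bern_pmf_le1 y (ltW c0) xc) //.
exact: ltW (bern_pmf_gt0 y c0 xc).
Qed.

Lemma bern_mix_pmfE (y : bern_out d k) :
  (\int[mu]_(x in cube d c) (bern_pmf d k x y)%:E)%E = (bern_mix_pmf d k mu y)%:E.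
Proof.
rewrite /bern_mix_pmf (integral_restrict_full (measurable_cube c)) //.
  by rewrite fineK // integrable_fin_num ?integrable_bern_pmf //; exact: measurable_cube.
exact: measurable_bern_pmf.
Qed.

Lemma bern_mix_pmf_gt0 (y : bern_out d k) : 0 < bern_mix_pmf d k mu y.
Proof.
apply: lt_le_trans (exprn_gt0 (d * k) c0) _; rewrite -lee_fin -bern_mix_pmfE.
apply: integral_ge_cst => //; first exact: measurable_cube.
  exact: integrable_bern_pmf.
by move=> x xc; apply: bern_pmf_ge => //; exact: ltW.
Qed.

Let mC : measurable (cube d c) := measurable_cube c.

Let bern_linE (C : bern_out d k -> R) :
  (EFin \o fun x => \sum_y C y * bern_pmf d k x y)
  = (fun x => \sum_y (C y)%:E * (bern_pmf d k x y)%:E)%E.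
Proof. by apply/funext => x /=; rewrite -sumEFin; apply: eq_bigr => y _; rewrite EFinM. Qed.

Let integrable_bern_term (C : bern_out d k -> R) (y : bern_out d k) :
  mu.-integrable (cube d c) (fun x => (C y)%:E * (bern_pmf d k x y)%:E)%E :=
  integrableZl mC (C y) (integrable_bern_pmf y).

Lemma integrable_bern_lin (C : bern_out d k -> R) :
  mu.-integrable (cube d c) (EFin \o fun x => \sum_y C y * bern_pmf d k x y).
Proof. by rewrite bern_linE; apply: integrable_sum => // y _; exact: integrable_bern_term. Qed.

Lemma integral_bern_lin (C : bern_out d k -> R) :
  (\int[mu]_(x in cube d c) (\sum_y C y * bern_pmf d k x y)%:E)%E
  = (\sum_y C y * bern_mix_pmf d k mu y)%:E.
Proof.
rewrite -[fun x => _]/(EFin \o _) bern_linE (integral_sum mC (integrable_bern_term C)).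
rewrite -sumEFin; apply: eq_bigr => y _.
by rewrite (integralZl mC (integrable_bern_pmf y)) bern_mix_pmfE EFinM.
Qed.

End bern_mix_pmf.

Section renyi_bern.
Context {R : realType} (d k : nat) (a c : R).
Hypotheses (a1 : 1 < a) (c0 : 0 < c).

Lemma sum_persp_bern_mix_le (mu nu : probability (d.-tuple R) R) :
  mu (cube d c) = 1%E -> nu (cube d c) = 1%E ->
  \sum_y persp a (bern_mix_pmf d k mu y) (bern_mix_pmf d k nu y)
  <= bern_affinity a c (1 - c) ^+ (d * k).
Proof.
move=> muC nuC; set P := bern_mix_pmf d k mu; set Q := bern_mix_pmf d k nu.
have P0 y : 0 < P y := bern_mix_pmf_gt0 c0 muC y.
have Q0 y : 0 < Q y := bern_mix_pmf_gt0 c0 nuC y.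
pose r y := P y / Q y.
have -> : \sum_y persp a (P y) (Q y)
    = \sum_y a * r y `^ (a - 1) * P y + \sum_y (1 - a) * r y `^ a * Q y.
  by rewrite -big_split; apply: eq_bigr => y _; rewrite -(persp_tangent_ratio a (P0 y) (Q0 y)).
rewrite -lee_fin EFinD -(integral_bern_lin c0 muC) -(integral_bern_lin c0 nuC).
apply: integral_pair_le_cst; rewrite ?integrable_bern_lin //; first exact: measurable_cube.
move=> x x' xc x'c; rewrite -big_split /=.
apply: le_trans (sum_persp_bern_pmf_le k a1 c0 xc x'c).
apply: ler_sum => y _; apply: persp_ge_tangent; rewrite ?divr_gt0 //;
  exact: bern_pmf_gt0 c0 _.
Qed.

Lemma renyi_pmf_bern_mix_le (mu nu : probability (d.-tuple R) R) :
  mu (cube d c) = 1%E -> nu (cube d c) = 1%E ->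
  (renyi_pmf a (bern_mix_pmf d k mu) (bern_mix_pmf d k nu)
   <= ((a - 1)^-1 * ln (bern_affinity a c (1 - c) ^+ (d * k)))%:E)%E.
Proof.
move=> muC nuC; set P := bern_mix_pmf d k mu; set Q := bern_mix_pmf d k nu.
have P0 y : 0 < P y := bern_mix_pmf_gt0 c0 muC y.
have Q0 y : 0 < Q y := bern_mix_pmf_gt0 c0 nuC y.
rewrite /renyi_pmf asboolT => [|y /eqP]; last by rewrite gt_eqF.
rewrite lee_fin; apply: ler_wpM2l; first by rewrite invr_ge0 subr_ge0 ltW.
have s_gt0 : 0 < \sum_y persp a (P y) (Q y).
  rewrite (bigD1 [ffun=> [ffun=> true]]) //= ltr_pwDl ?persp_gt0 //.
  by rewrite sumr_ge0 // => y _; rewrite ltW ?persp_gt0.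
have s_le := sum_persp_bern_mix_le muC nuC.
rewrite /persp in s_gt0 s_le; rewrite ler_ln ?posrE //; exact: lt_le_trans s_le.
Qed.

Lemma renyi_pmf_bern_const : c <= 1 - c ->
  renyi_pmf a (bern_pmf d k (const_vec d c)) (bern_pmf d k (const_vec d (1 - c)))
  = ((a - 1)^-1 * ln (bern_affinity a c (1 - c) ^+ (d * k)))%:E.
Proof.
move=> c_le; have [cc c'c] := const_vec_cube d c_le.
rewrite /renyi_pmf asboolT => [|y /eqP]; last by rewrite gt_eqF ?(bern_pmf_gt0 y c0 c'c).
have := sum_persp_bern_pmf k a (ltW c0) cc c'c; rewrite /persp => ->.
rewrite exprM; congr ((_ * ln (_ ^+ _))%:E).
by rewrite -[d in RHS]card_ord -prodr_const; apply: eq_bigr => i _; rewrite !tnth_nseq.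
Qed.

End renyi_bern.

Theorem theorem5 (R : realType) (Dset : Type) (nb : Dset -> Dset -> Prop)
  (nb_sym : forall D D', nb D D' -> nb D' D)
  (d k : nat) (hd : (1 <= d)%N) (hk : (1 <= k)%N)
  (c alpha eps : R) (hc0 : 0 < c) (hc1 : c < 1 / 2) (halpha : 1 < alpha)
  (heps : 0 <= eps) :
  (post nb d k (algs_in_cube d c) alpha eps%:E
     <= renyi_pmf alpha (bern_pmf d k (const_vec d c))
                        (bern_pmf d k (const_vec d (1 - c))))%E
  /\ renyi_pmf alpha (bern_pmf d k (const_vec d c))
                     (bern_pmf d k (const_vec d (1 - c)))
     = ((d * k)%:R * r_fun alpha c)%:E.
Proof.
rewrite renyi_pmf_bern_const //; last by lra.
split.
  apply: ge_ereal_sup => _ [A [A_cube _] <-].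
  apply: ge_ereal_sup => _ [D [D' [_ ->]]].
  exact: renyi_pmf_bern_mix_le.
have c01 : 0 < c < 1 by apply/andP; split; lra.
have c'01 : 0 < 1 - c < 1 by apply/andP; split; lra.
have H0_gt0 := lt_le_trans ltr01 (bern_affinity_ge1 halpha c01 c'01).
by rewrite lnXn // /r_fun /bern_affinity /persp subKr mulr_natl mulrnAr.
Qed.
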